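(* Let $G$ be the cdf of a continuous real random variable. For $(\lambda_1,\lambda_2)\in\mathbb{R}^2$ define $$F_{R18b}(x)=(1+\lambda_1+\lambda_2)G(x)-(\lambda_1+2\lambda_2)G^2(x)+\lambda_2G^3(x),\qquad F_G(x)=\lambda_1 G(x)+(\lambda_2-\lambda_1)G^2(x)+(1-\lambda_2)G^3(x).$$ Let $\mathscr{S}_{R18b}=\{(\lambda_1,\lambda_2): -1\le\lambda_1\le1,\ 0\le\lambda_2\le1\}$, $\mathscr{S}_{MR18b}=\{(\lambda_1,\lambda_2): -2\le\lambda_1\le1,\ -2\le\lambda_2\le1,\ -1\le\lambda_1+\lambda_2\le2\}$ and $\mathscr{S}_{MG}=\{(\lambda_1,\lambda_2):0\le\lambda_1\le3,\ 0\le\lambda_2\le3,\ 0\le\lambda_1+\lambda_2\le3\}$. Then: (i) For every $(\lambda_1,\lambda_2)\in\mathscr{S}_{R18b}$, $F_{R18b}$ is a cdf. (ii) For every $(\lambda_1,\lambda_2)\in\mathscr{S}_{MR18b}$, $F_{R18b}$ is a cdf. (iii) For every $(\lambda_1,\lambda_2)\in\mathscr{S}_{MR18b}$, $(1+\lambda_1+\lambda_2,1-\lambda_2)\in\mathscr{S}_{MG}$ and $F_{R18b}$ with parameters $(\lambda_1,\lambda_2)$ coincides with $F_G$ with parameters $(1+\lambda_1+\lambda_2,1-\lambda_2)$. (iv) For every $(\lambda_1,\lambda_2)\in\mathscr{S}_{MG}$, $(\lambda_1+\lambda_2-2,1-\lambda_2)\in\mathscr{S}_{MR18b}$ and $F_G$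 with parameters $(\lambda_1,\lambda_2)$ coincides with $F_{R18b}$ with parameters $(\lambda_1+\lambda_2-2,1-\lambda_2)$.
   Context: A cdf is a nondecreasing, right-continuous function $F:\mathbb{R}\to[0,1]$ with limits $0$ at $-\infty$ and $1$ at $+\infty$. $G^k(x)=(G(x))^k$. *)

From Stdlib Require Import Reals.
From Coquelicot Require Import Coquelicot.
Open Scope R_scope.

Definition is_cdf (F : R -> R) : Prop :=
  (forall x, 0 <= F x <= 1) /\
  (forall x y, x <= y -> F x <= F y) /\
  (forall x, filterlim F (at_right x) (locally (F x))) /\
  filterlim F (Rbar_locally m_infty) (locally 0) /\
  filterlim F (Rbar_locally p_infty) (locally 1).

Definition is_continuous_cdf (G : R -> R) : Prop :=
  is_cdf G /\ (forall x, continuous G x).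

Definition F_R18b (l1 l2 : R) (G : R -> R) (x : R) : R :=
  (1 + l1 + l2) * G x - (l1 + 2 * l2) * (G x) ^ 2 + l2 * (G x) ^ 3.

Definition F_G (l1 l2 : R) (G : R -> R) (x : R) : R :=
  l1 * G x + (l2 - l1) * (G x) ^ 2 + (1 - l2) * (G x) ^ 3.

Definition S_R18b (l1 l2 : R) : Prop :=
  -1 <= l1 <= 1 /\ 0 <= l2 <= 1.

Definition S_MR18b (l1 l2 : R) : Prop :=
  -2 <= l1 <= 1 /\ -2 <= l2 <= 1 /\ -1 <= l1 + l2 <= 2.

Definition S_MG (l1 l2 : R) : Prop :=
  0 <= l1 <= 3 /\ 0 <= l2 <= 3 /\ 0 <= l1 + l2 <= 3.

(* In the Bernstein basis of degree 3, the cubic p with F_G = p o G has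
   coefficients 0, l1/3, (l1 + l2)/3, 1.  They are nondecreasing exactly on
   S_MG, which makes p a nondecreasing self-map of [0,1] fixing 0 and 1, so
   p o G is a cdf whenever G is.  The R18b
   family is the same family of cubics under an affine change of parameters
   mapping S_MR18b onto S_MG. *)
From Stdlib Require Import Reals Lra Psatz FunctionalExtensionality.
From Coquelicot Require Import Coquelicot.
Open Scope R_scope.

Lemma is_cdf_comp (p G : R -> R) :
  is_cdf G -> (forall t, continuous p t) -> p 0 = 0 -> p 1 = 1 ->
  (forall s t, 0 <= s -> s <= t -> t <= 1 -> p s <= p t) ->
  is_cdf (fun x => p (G x)).
Proof.
  intros [G01 [Gmon [Grc [Gm Gp]]]] pc p0 p1 pmon.
  split; [| split; [| split; [| split]]].
  - intro x. destruct (G01 x) as [G0 G1].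
    rewrite <- p0, <- p1. split; apply pmon; lra.
  - intros x y Hxy. apply pmon; [apply G01 | apply Gmon, Hxy | apply G01].
  - intro x. eapply filterlim_comp; [apply Grc | apply pc].
  - rewrite <- p0. eapply filterlim_comp; [apply Gm | apply pc].
  - rewrite <- p1. eapply filterlim_comp; [apply Gp | apply pc].
Qed.

(* Discrete form of p' = 3 * sum_k (b_(k+1) - b_k) B_(k,2): the three weights
   are the successive differences of the Bernstein coefficients of p. *)
Lemma F_G_id_sub (l1 l2 s t : R) :
  F_G l1 l2 (fun u => u) t - F_G l1 l2 (fun u => u) s =
  (t - s) * (l1 / 3 * ((1 - s) ^ 2 + (1 - s) * (1 - t) + (1 - t) ^ 2)
             + l2 / 3 * (3 * (s + t) - 2 * (s ^ 2 + s * t + t ^ 2))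
             + (1 - (l1 + l2) / 3) * (s ^ 2 + s * t + t ^ 2)).
Proof. unfold F_G. field. Qed.

Lemma F_G_id_nondecreasing (l1 l2 s t : R) : S_MG l1 l2 ->
  0 <= s -> s <= t -> t <= 1 ->
  F_G l1 l2 (fun u => u) s <= F_G l1 l2 (fun u => u) t.
Proof.
  intros [[l1_ge0 _] [[l2_ge0 _] [_ l12_le3]]] s_ge0 st t_le1.
  cut (0 <= F_G l1 l2 (fun u => u) t - F_G l1 l2 (fun u => u) s); [lra |].
  rewrite F_G_id_sub. apply Rmult_le_pos; [lra |].
  assert (0 <= (1 - s) ^ 2 + (1 - s) * (1 - t) + (1 - t) ^ 2) by nra.
  assert (0 <= 3 * (s + t) - 2 * (s ^ 2 + s * t + t ^ 2)) by nra.
  assert (0 <= s ^ 2 + s * t + t ^ 2) by nra.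
  repeat apply Rplus_le_le_0_compat; apply Rmult_le_pos; lra.
Qed.

Lemma F_G_is_cdf (l1 l2 : R) (G : R -> R) :
  is_cdf G -> S_MG l1 l2 -> is_cdf (F_G l1 l2 G).
Proof.
  intros HG HS.
  change (is_cdf (fun x => F_G l1 l2 (fun u => u) (G x))).
  apply is_cdf_comp; [exact HG | | unfold F_G; ring | unfold F_G; ring |].
  - intro t. apply (@ex_derive_continuous R_AbsRing R_NormedModule).
    unfold F_G. auto_derive. trivial.
  - intros s t. now apply F_G_id_nondecreasing.
Qed.

Lemma F_R18b_F_G (l1 l2 : R) : F_R18b l1 l2 = F_G (1 + l1 + l2) (1 - l2).
Proof.
  apply functional_extensionality; intro G.
  apply functional_extensionality; intro x.
  unfold F_R18b, F_G. ring.
Qed.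

Lemma F_G_F_R18b (l1 l2 : R) : F_G l1 l2 = F_R18b (l1 + l2 - 2) (1 - l2).
Proof.
  rewrite F_R18b_F_G. f_equal; ring.
Qed.

Lemma S_R18b_S_MR18b (l1 l2 : R) : S_R18b l1 l2 -> S_MR18b l1 l2.
Proof. unfold S_R18b, S_MR18b. lra. Qed.

Lemma S_MR18b_S_MG (l1 l2 : R) : S_MR18b l1 l2 -> S_MG (1 + l1 + l2) (1 - l2).
Proof. unfold S_MR18b, S_MG. lra. Qed.

Lemma S_MG_S_MR18b (l1 l2 : R) : S_MG l1 l2 -> S_MR18b (l1 + l2 - 2) (1 - l2).
Proof. unfold S_MG, S_MR18b. lra. Qed.

Lemma F_R18b_is_cdf (l1 l2 : R) (G : R -> R) :
  is_cdf G -> S_MR18b l1 l2 -> is_cdf (F_R18b l1 l2 G).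
Proof.
  intros HG HS. rewrite F_R18b_F_G.
  now apply F_G_is_cdf, S_MR18b_S_MG.
Qed.

Theorem proposition4 (G : R -> R) (HG : is_continuous_cdf G) :
  (forall l1 l2, S_R18b l1 l2 -> is_cdf (F_R18b l1 l2 G)) /\
  (forall l1 l2, S_MR18b l1 l2 -> is_cdf (F_R18b l1 l2 G)) /\
  (forall l1 l2, S_MR18b l1 l2 ->
     S_MG (1 + l1 + l2) (1 - l2) /\
     forall x, F_R18b l1 l2 G x = F_G (1 + l1 + l2) (1 - l2) G x) /\
  (forall l1 l2, S_MG l1 l2 ->
     S_MR18b (l1 + l2 - 2) (1 - l2) /\
     forall x, F_G l1 l2 G x = F_R18b (l1 + l2 - 2) (1 - l2) G x).
Proof.
  destruct HG as [G_cdf _].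
  split; [| split; [| split]]; intros l1 l2 HS.
  - now apply F_R18b_is_cdf, S_R18b_S_MR18b.
  - now apply F_R18b_is_cdf.
  - split; [now apply S_MR18b_S_MG |]. now rewrite F_R18b_F_G.
  - split; [now apply S_MG_S_MR18b |]. now rewrite F_G_F_R18b.
Qed.
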